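(* Let $X$ be a real Banach space and $J,Y$ closed subspaces with $J\subseteq Y\subseteq X$, where $J$ is an $M$-ideal in $X$. If $Y/J$ has property-$(HB)$ in $X/J$, then $Y$ has property-$(HB)$ in $X$.
   Context: For a closed subspace $V$ of a Banach space $E$, $V^\perp=\{e^*\in E^*:e^*|_V=0\}$. $J$ is an $M$-ideal in $X$ if there is a closed subspace $W$ of $X^*$ with $X^*=J^\perp\oplus W$ and $\|u+w\|=\|u\|+\|w\|$ for $u\in J^\perp,w\in W$. $V$ has property-$(HB)$ in $E$ if there is a linear projection $P$ on $E^*$ with range $V^\perp$ and $\|P\|=1$ such that, writing $G=(I-P)(E^* )$, for every $e^*=v^\#+v^\perp$ with $v^\#\in G$, $0\neq v^\perp\in V^\perp$, one has $\|e^*\|>\|v^\#\|$ and $\|e^*\|\ge\|v^\perp\|$. $Y/J$ is regarded as a subspace of $X/J$ with the quotient norm. *)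

From HB Require Import structures.
From mathcomp Require Import all_boot all_order all_algebra.
From mathcomp Require Import all_classical all_reals all_analysis.
Set Implicit Arguments. Unset Strict Implicit. Unset Printing Implicit Defensive.
Import Order.TTheory GRing.Theory Num.Theory.
Local Open Scope classical_set_scope.
Local Open Scope ring_scope.

(* Functionals on a space E are represented as functions X -> R on the
   underlying vector space X; E is given by a seminorm N on X
   (N = norm of X for E = X, N = quotient seminorm for E = X/J). *)

Definition is_subspace {R : realType} {X : normedModType R} (V : set X) :=
  V 0 /\ forall (a : R) (x y : X), V x -> V y -> V (a *: x + y).

Definition closed_subspace {R : realType} {X : normedModType R} (V : set X) :=
  closed V /\ is_subspace V.

Definition lin_fun {R : realType} {X : normedModType R} (f : X -> R) :=
  forall (a : R) (x y : X), f (a *: x + y) = a * f x + f y.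

Definition dualN {R : realType} {X : normedModType R} (N : X -> R) (f : X -> R) :=
  lin_fun f /\ exists C : R, forall x, `|f x| <= C * N x.

Definition fnorm {R : realType} {X : normedModType R} (N : X -> R) (f : X -> R) : R :=
  sup [set `|f x| | x in [set x | N x <= 1]].

Definition perp {R : realType} {X : normedModType R} (V : set X) (f : X -> R) :=
  forall v, V v -> f v = 0.

Definition nrm {R : realType} {X : normedModType R} (x : X) : R := `|x|.

Definition qnorm {R : realType} {X : normedModType R} (J : set X) (x : X) : R :=
  inf [set `|x + j| | j in J].

Definition propHB {R : realType} {X : normedModType R} (N : X -> R) (V : set X) :=
  exists P : (X -> R) -> (X -> R),
    (forall f, dualN N f -> dualN N (P f)) /\
        (forall (a : R) f g, dualN N f -> dualN N g ->
            P (fun x => a * f x + g x) = (fun x => a * P f x + P g x)) /\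
        (forall f, dualN N f -> P (P f) = P f) /\
        (forall f, dualN N f -> perp V (P f)) /\
        (forall g, dualN N g -> perp V g -> exists2 f, dualN N f & P f = g) /\
        sup [set fnorm N (P f) | f in [set f | dualN N f /\ fnorm N f <= 1]] = 1 /\
      (forall f vp, dualN N f -> dualN N vp -> perp V vp -> vp <> (fun _ => 0) ->
           let vs := (fun x => f x - P f x) in
           let e := (fun x => vs x + vp x) in
           fnorm N vs < fnorm N e /\ fnorm N vp <= fnorm N e).

Definition M_ideal {R : realType} {X : normedModType R} (J : set X) :=
  exists W : set (X -> R),
    (forall w, W w -> dualN nrm w) /\
        W (fun _ => 0) /\
        (forall (a : R) w1 w2, W w1 -> W w2 -> W (fun x => a * w1 x + w2 x)) /\
        (forall f, dualN nrm f ->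
           (forall e : R, 0 < e -> exists2 w, W w & fnorm nrm (fun x => f x - w x) < e) ->
           W f) /\
        (forall f, dualN nrm f -> perp J f -> W f -> f = (fun _ => 0)) /\
        (forall f, dualN nrm f -> exists u, exists2 w,
              dualN nrm u /\ perp J u & W w /\ f = (fun x => u x + w x)) /\
      (forall u w, dualN nrm u -> perp J u -> W w ->
           fnorm nrm (fun x => u x + w x) = fnorm nrm u + fnorm nrm w).

From mathcomp Require Import all_boot all_order all_algebra.
From mathcomp Require Import all_classical all_reals all_analysis.
From mathcomp Require Import lra ring.
Import Order.TTheory GRing.Theory Num.Theory.
Local Open Scope classical_set_scope.
Local Open Scope ring_scope.
Set Implicit Arguments. Unset Strict Implicit.

(* Since J is an M-ideal, J^⊥ is an L-summand of X^*: the projection U onto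
   J^⊥ along W satisfies ‖u + (f - U f)‖ = ‖u‖ + ‖f - U f‖ for u ∈ J^⊥.
   Bounded functionals vanishing on J are exactly the functionals of X/J, with
   the same norm, and Y^⊥ ⊆ J^⊥.  Hence Q ∘ U, with Q the HB projection of
   (X/J)^*, is a norm-one projection of X^* onto Y^⊥; for e = f - Q (U f) + v,
   the L-decomposition adds the same ‖f - U f‖ to both sides of each
   inequality that Q provides at U f. *)

Lemma le_mul_inf (R : realType) (S : set R) (a c : R) :
  S !=set0 -> 0 <= c -> (forall s, S s -> a <= c * s) -> a <= c * inf S.
Proof.
move=> [s Ss] c0 Sa; have [c_eq0|c_neq0] := eqVneq c 0.
  by move: (Sa s Ss); rewrite c_eq0 !mul0r.
have c_gt0 : 0 < c by rewrite lt_def c_neq0 c0.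
rewrite -ler_pdivrMl //; apply: lb_le_inf; first by exists s.
by move=> t St; rewrite ler_pdivrMl //; apply: Sa.
Qed.

Section LinearFunctionals.
Variables (R : realType) (X : normedModType R).
Implicit Types (N f g : X -> R) (V : set X).

Lemma lin_fun0 f : lin_fun f -> f 0 = 0.
Proof.
move=> lf; have := lf 1 0 0; rewrite scale1r addr0 mul1r => f0D.
by apply: (addrI (f 0)); rewrite addr0 -f0D.
Qed.

Lemma lin_funZ f a x : lin_fun f -> f (a *: x) = a * f x.
Proof. by move=> lf; have := lf a x 0; rewrite addr0 lin_fun0 // addr0. Qed.

Lemma lin_funD f x y : lin_fun f -> f (x + y) = f x + f y.
Proof. by move=> lf; have := lf 1 x y; rewrite scale1r mul1r. Qed.

Lemma dualN_comb N a f g :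
  dualN N f -> dualN N g -> dualN N (fun x => a * f x + g x).
Proof.
move=> [lf [C HC]] [lg [D HD]]; split=> [b x y|]; first by rewrite lf lg; ring.
exists (`|a| * C + D) => x; rewrite mulrDl -mulrA.
apply: le_trans (ler_normD _ _) _; rewrite normrM.
by apply: lerD => //; apply: ler_wpM2l.
Qed.

Lemma dualN_add N f g : dualN N f -> dualN N g -> dualN N (fun x => f x + g x).
Proof.
have -> : (fun x => f x + g x) = (fun x => 1 * f x + g x).
  by apply: funext => x; rewrite mul1r.
exact: dualN_comb.
Qed.

Lemma dualN_sub N f g : dualN N f -> dualN N g -> dualN N (fun x => f x - g x).
Proof.
have -> : (fun x => f x - g x) = (fun x => -1 * g x + f x).
  by apply: funext => x; ring.
by move=> df dg; apply: dualN_comb.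
Qed.

Lemma perp_comb V a f g : perp V f -> perp V g -> perp V (fun x => a * f x + g x).
Proof. by move=> pf pg v Vv; rewrite pf // pg // mulr0 addr0. Qed.

Lemma perp_add V f g : perp V f -> perp V g -> perp V (fun x => f x + g x).
Proof. by move=> pf pg v Vv; rewrite pf // pg // addr0. Qed.

Lemma perp_sub V f g : perp V f -> perp V g -> perp V (fun x => f x - g x).
Proof. by move=> pf pg v Vv; rewrite pf // pg // subrr. Qed.

Lemma fnorm_ge0 N f : 0 <= fnorm N f.
Proof.
rewrite /fnorm; set S := [set _ | _ in _].
have [supS|] := pselect (has_sup S); last by move=> ?; rewrite sup_out.
have [[y [x x1 fxy]] _] := supS; subst y.
by apply: le_trans (normr_ge0 (f x)) _; apply: ub_le_sup; [case: supS | exists x].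
Qed.

Lemma ler_fnorm f y : dualN nrm f -> `|f y| <= fnorm nrm f * `|y|.
Proof.
move=> [lf [C HC]]; have [->|y_neq0] := eqVneq y 0.
  by rewrite lin_fun0 // !normr0 mulr0.
have y_gt0 : 0 < `|y| by rewrite normr_gt0.
have -> : `|f y| = `|f (`|y|^-1 *: y)| * `|y|.
  by rewrite lin_funZ // normrM ger0_norm ?invr_ge0 // mulrAC mulVf ?mul1r ?gt_eqF.
rewrite ler_pM2r //; apply: ub_le_sup; last first.
  exists (`|y|^-1 *: y) => //=.
  by rewrite /nrm normrZ ger0_norm ?invr_ge0 // mulVf ?gt_eqF.
exists `|C| => _ [x /= x1 <-]; apply: le_trans (HC x) _; rewrite /nrm in x1 *.
by have := normr_ge0 x; have := ler_norm C; have := normr_ge0 C; nra.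
Qed.

End LinearFunctionals.

Section QuotientNorm.
Variables (R : realType) (X : normedModType R) (J : set X).
Hypothesis sJ : is_subspace J.
Implicit Types (f g : X -> R) (x j : X).

Lemma qnorm_le x j : J j -> qnorm J x <= `|x + j|.
Proof. by move=> Jj; apply: ge_inf; [exists 0 => _ [? _ <-] | exists j]. Qed.

Lemma qnorm_le_norm x : qnorm J x <= `|x|.
Proof. by have := qnorm_le x sJ.1; rewrite addr0. Qed.

Lemma qnorm_ge c a x :
  0 <= c -> (forall j, J j -> a <= c * `|x + j|) -> a <= c * qnorm J x.
Proof.
move=> c0 ub; apply: le_mul_inf => // [|_ [j Jj <-]]; last exact: ub.
by exists `|x + 0|, 0 => //; exact: sJ.1.
Qed.

Lemma qnorm_ge0 x : 0 <= qnorm J x.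
Proof. by rewrite -[qnorm J x]mul1r; apply: qnorm_ge => // j _; rewrite mul1r. Qed.

Lemma qnorm_eq0 j : J j -> qnorm J j = 0.
Proof.
move=> Jj; apply/eqP; rewrite eq_le qnorm_ge0 andbT.
have := qnorm_le j (sJ.2 (-1) j 0 Jj sJ.1).
by rewrite addr0 scaleN1r subrr normr0.
Qed.

Lemma perp_lin_funD f x j : lin_fun f -> perp J f -> J j -> f (x + j) = f x.
Proof. by move=> lf pf Jj; rewrite lin_funD // (pf j Jj) addr0. Qed.

Lemma dualN_qnormP f : dualN (qnorm J) f <-> dualN nrm f /\ perp J f.
Proof.
split=> [[lf [C HC]]|[[lf [C HC]] pf]].
  split; first (split => //; exists `|C| => x; apply: le_trans (HC x) _).
    have := qnorm_ge0 x; have := qnorm_le_norm x; rewrite /nrm.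
    by have := ler_norm C; have := normr_ge0 C; nra.
  move=> j Jj; apply/normr0_eq0/le_anti; rewrite normr_ge0 andbT.
  by rewrite -(mulr0 C) -(qnorm_eq0 Jj).
split=> //; exists `|C| => x; apply: qnorm_ge => // j Jj.
rewrite -(perp_lin_funD x lf pf Jj); apply: le_trans (HC _) _; rewrite /nrm.
by have := ler_norm C; have := normr_ge0 (x + j); nra.
Qed.

Lemma fnorm_qnorm g : dualN nrm g -> perp J g -> fnorm (qnorm J) g = fnorm nrm g.
Proof.
move=> dg pg; set B := [set `|g x| | x in [set x | qnorm J x <= 1]].
have B_ub : ubound B (fnorm nrm g).
  move=> _ [x /= x1 <-].
  have : `|g x| <= fnorm nrm g * qnorm J x.
    apply: qnorm_ge; first exact: fnorm_ge0.
    by move=> j Jj; rewrite -(perp_lin_funD x dg.1 pg Jj); apply: ler_fnorm.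
  by have := fnorm_ge0 nrm g; have := qnorm_ge0 x; nra.
apply/le_anti/andP; split.
  apply: ge_sup => //; exists `|g 0|, 0 => //=.
  by rewrite qnorm_eq0 ?ler01 //; exact: sJ.1.
apply: ge_sup.
  by exists `|g 0|, 0 => //=; rewrite /nrm normr0 ler01.
move=> _ [x /= x1 <-]; apply: ub_le_sup; first by exists (fnorm nrm g).
by exists x => //=; apply: le_trans (qnorm_le_norm x) x1.
Qed.

End QuotientNorm.

Definition Lproj_perp (R : realType) (X : normedModType R) (J : set X)
    (U : (X -> R) -> X -> R) :=
  [/\ forall f, dualN nrm f -> dualN nrm (U f) /\ perp J (U f),
      forall g, dualN nrm g -> perp J g -> U g = g,
      forall a f g, dualN nrm f -> dualN nrm g ->
        U (fun x => a * f x + g x) = (fun x => a * U f x + U g x) &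
      forall f u, dualN nrm f -> dualN nrm u -> perp J u ->
        fnorm nrm (fun x => u x + (f x - U f x))
        = fnorm nrm u + fnorm nrm (fun x => f x - U f x)].

Section MIdealProjection.
Variables (R : realType) (X : normedModType R) (J : set X) (W : set (X -> R)).
Hypotheses (W0 : W (fun _ => 0))
  (W_comb : forall a w1 w2, W w1 -> W w2 -> W (fun x => a * w1 x + w2 x))
  (W_perp_eq0 : forall f, dualN nrm f -> perp J f -> W f -> f = (fun _ => 0))
  (W_fnormD : forall u w, dualN nrm u -> perp J u -> W w ->
     fnorm nrm (fun x => u x + w x) = fnorm nrm u + fnorm nrm w).
Variable U : (X -> R) -> X -> R.
Hypothesis U_dec : forall f, dualN nrm f ->
  [/\ dualN nrm (U f), perp J (U f) & W (fun x => f x - U f x)].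
Implicit Types (f g u : X -> R).

Lemma Mproj_uniq f u :
  dualN nrm f -> dualN nrm u -> perp J u -> W (fun x => f x - u x) -> U f = u.
Proof.
move=> df du pu Wfu; have [dUf pUf WfUf] := U_dec df.
have WUfu : W (fun x => U f x - u x).
  have -> : (fun x => U f x - u x) = (fun x => -1 * (f x - U f x) + (f x - u x)).
    by apply: funext => x; ring.
  exact: W_comb.
have := W_perp_eq0 (dualN_sub dUf du) (perp_sub pUf pu) WUfu.
move=> /(congr1 (fun h => h _)) eq0; apply: funext => x.
by apply/eqP; rewrite -subr_eq0 eq0.
Qed.

Lemma Mproj_id g : dualN nrm g -> perp J g -> U g = g.
Proof.
move=> dg pg; apply: Mproj_uniq => //.
by have -> : (fun x => g x - g x) = (fun _ => 0) by apply: funext => x; rewrite subrr.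
Qed.

Lemma Mproj_comb a f g : dualN nrm f -> dualN nrm g ->
  U (fun x => a * f x + g x) = (fun x => a * U f x + U g x).
Proof.
move=> df dg; have [dUf pUf Wf] := U_dec df; have [dUg pUg Wg] := U_dec dg.
apply: Mproj_uniq; [exact: dualN_comb | exact: dualN_comb | exact: perp_comb |].
have -> : (fun x => a * f x + g x - (a * U f x + U g x))
    = (fun x => a * (f x - U f x) + (g x - U g x)) by apply: funext => x; ring.
exact: W_comb.
Qed.

Lemma Mproj_Lproj_perp : Lproj_perp J U.
Proof.
split; [by move=> f /U_dec[] | exact: Mproj_id | exact: Mproj_comb |].
by move=> f u /U_dec[_ _ Wf] du pu; apply: W_fnormD.
Qed.

End MIdealProjection.

Lemma M_ideal_Lproj_perp (R : realType) (X : normedModType R) (J : set X) :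
  M_ideal J -> exists U, Lproj_perp J U.
Proof.
move=> [W [_ [W0 [W_comb [_ [W_perp_eq0 [W_dec W_fnormD]]]]]]].
have /choice[U U_dec] : forall f : X -> R, exists u, dualN nrm f ->
    [/\ dualN nrm u, perp J u & W (fun x => f x - u x)].
  move=> f; have [df|] := pselect (dualN nrm f); last by exists f.
  have [u [w [du pu] [Ww fE]]] := W_dec f df; exists u => _; split => //.
  by have -> : (fun x => f x - u x) = w by apply: funext => x; rewrite fE /=; ring.
by exists U; exact: (Mproj_Lproj_perp W0 W_comb W_perp_eq0 W_fnormD U_dec).
Qed.

Lemma Lproj_perp_fnorm_le (R : realType) (X : normedModType R) (J : set X) U f :
  Lproj_perp J U -> dualN nrm f -> fnorm nrm (U f) <= fnorm nrm f.
Proof.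
move=> [U_dual _ _ U_fnormD] df; have [dUf pUf] := U_dual f df.
have := U_fnormD f (U f) df dUf pUf.
have -> : (fun x => U f x + (f x - U f x)) = f by apply: funext => x; ring.
by move=> ->; rewrite lerDl fnorm_ge0.
Qed.

Section HBLift.
Variables (R : realType) (X : normedModType R) (J Y : set X).
Variables (U Q : (X -> R) -> X -> R).
Local Notation qJ := (qnorm J).
Hypotheses (sJ : is_subspace J) (JY : J `<=` Y) (HU : Lproj_perp J U).
Hypotheses (Q_dual : forall f, dualN qJ f -> dualN qJ (Q f))
  (Q_comb : forall a f g, dualN qJ f -> dualN qJ g ->
     Q (fun x => a * f x + g x) = (fun x => a * Q f x + Q g x))
  (Q_idem : forall f, dualN qJ f -> Q (Q f) = Q f)
  (Q_perp : forall f, dualN qJ f -> perp Y (Q f))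
  (Q_onto : forall g, dualN qJ g -> perp Y g -> exists2 f, dualN qJ f & Q f = g)
  (Q_sup : sup [set fnorm qJ (Q f) | f in [set f | dualN qJ f /\ fnorm qJ f <= 1]] = 1)
  (Q_HB : forall f vp, dualN qJ f -> dualN qJ vp -> perp Y vp -> vp <> (fun _ => 0) ->
     let vs := (fun x => f x - Q f x) in
     let e := (fun x => vs x + vp x) in
     fnorm qJ vs < fnorm qJ e /\ fnorm qJ vp <= fnorm qJ e).
Implicit Types (f g : X -> R).

Let qJ_dualP g : dualN qJ g <-> dualN nrm g /\ perp J g := dualN_qnormP sJ g.

Let U_qJ f : dualN nrm f -> dualN qJ (U f).
Proof. by move=> df; apply/qJ_dualP; case: HU => /(_ f df). Qed.

Let fnorm_qJ g : dualN qJ g -> fnorm qJ g = fnorm nrm g.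
Proof. by move=> /qJ_dualP[dg pg]; apply: fnorm_qnorm. Qed.

Let perp_Y_J g : perp Y g -> perp J g.
Proof. by move=> pg v Jv; apply/pg/JY. Qed.

Lemma QU_dual f : dualN nrm f -> dualN nrm (Q (U f)) /\ perp J (Q (U f)).
Proof. by move=> df; apply/qJ_dualP/Q_dual/U_qJ. Qed.

Lemma QU_comb a f g : dualN nrm f -> dualN nrm g ->
  Q (U (fun x => a * f x + g x)) = (fun x => a * Q (U f) x + Q (U g) x).
Proof.
by move=> df dg; case: HU => _ _ U_comb _; rewrite U_comb // Q_comb //; apply: U_qJ.
Qed.

Lemma QU_idem f : dualN nrm f -> Q (U (Q (U f))) = Q (U f).
Proof.
move=> df; have [dQUf pQUf] := QU_dual df.
by case: HU => _ U_id _ _; rewrite U_id // Q_idem //; apply: U_qJ.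
Qed.

Lemma QU_onto g : dualN nrm g -> perp Y g -> exists2 f, dualN nrm f & Q (U f) = g.
Proof.
move=> dg pg; have dqg : dualN qJ g by apply/qJ_dualP; split=> //; exact: perp_Y_J.
have [f dqf <-] := Q_onto dqg pg.
have [df pf] := (qJ_dualP f).1 dqf.
by exists f => //; case: HU => _ U_id _ _; rewrite U_id.
Qed.

Lemma QU_sup :
  sup [set fnorm nrm (Q (U f)) | f in [set f | dualN nrm f /\ fnorm nrm f <= 1]] = 1.
Proof.
rewrite -[RHS]Q_sup; congr sup; apply/seteqP; split=> _ [f [df f1] <-].
  have dUf := U_qJ df; exists (U f); last by rewrite fnorm_qJ //; apply: Q_dual.
  by split=> //; rewrite fnorm_qJ //; apply: le_trans (Lproj_perp_fnorm_le HU df) f1.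
have [dnf pf] := (qJ_dualP f).1 df.
exists f; first by split=> //; rewrite -fnorm_qJ.
by case: HU => _ U_id _ _; rewrite U_id // fnorm_qJ //; apply: Q_dual.
Qed.

Lemma QU_HB f vp : dualN nrm f -> dualN nrm vp -> perp Y vp -> vp <> (fun _ => 0) ->
  let vs := (fun x => f x - Q (U f) x) in
  let e := (fun x => vs x + vp x) in
  fnorm nrm vs < fnorm nrm e /\ fnorm nrm vp <= fnorm nrm e.
Proof.
move=> df dvp pvp vp_neq0 vs e.
have pvpJ := perp_Y_J pvp; have dvpJ : dualN qJ vp by apply/qJ_dualP.
have := Q_HB (U_qJ df) dvpJ pvp vp_neq0 => /=.
set ws := (fun x => U f x - Q (U f) x); set we := (fun x => ws x + vp x).
have [dQUf pQUf] := QU_dual df; have [dUf pUf] := (qJ_dualP _).1 (U_qJ df).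
have [dws pws] : dualN nrm ws /\ perp J ws by split; [apply: dualN_sub | apply: perp_sub].
have [dwe pwe] : dualN nrm we /\ perp J we by split; [apply: dualN_add | apply: perp_add].
rewrite !fnorm_qJ; try by apply/qJ_dualP.
case: HU => _ _ _ /(_ f _ df) U_fnormD.
have -> : vs = (fun x => ws x + (f x - U f x)).
  by apply: funext => x; rewrite /vs /ws; ring.
have -> : e = (fun x => we x + (f x - U f x)).
  by apply: funext => x; rewrite /e /vs /we /ws; ring.
rewrite !U_fnormD //; have := fnorm_ge0 nrm (fun x => f x - U f x).
by move=> r_ge0 [vs_lt vp_le]; split; lra.
Qed.

Lemma propHB_lift : propHB nrm Y.
Proof.
exists (fun f => Q (U f)); split; [by move=> f /QU_dual[] | split; [exact: QU_comb |]].
split; [exact: QU_idem | split; [by move=> f df; apply/Q_perp/U_qJ |]].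
by split; [exact: QU_onto | split; [exact: QU_sup | exact: QU_HB]].
Qed.

End HBLift.

Theorem theorem3p11 (R : realType) (X : completeNormedModType R) (J Y : set X) :
  closed_subspace J -> closed_subspace Y -> J `<=` Y ->
  M_ideal J -> propHB (qnorm J) Y -> propHB nrm Y.
Proof.
move=> [_ sJ] _ JY /M_ideal_Lproj_perp[U HU].
move=> [Q [Q_dual [Q_comb [Q_idem [Q_perp [Q_onto [Q_sup Q_HB]]]]]]].
exact: (propHB_lift sJ JY HU Q_dual Q_comb Q_idem Q_perp Q_onto Q_sup Q_HB).
Qed.
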